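(* Let $V$ be a finite-dimensional real vector space and $\mathcal{C}\subset V$ an open convex cone with closure $\overline{\mathcal{C}}$. Every completely monotone function $f:\mathcal{C}\rightarrow\mathbb{R}_{+}$ satisfies \[ \sum_{i=1}^{n}f(x_{i})-\sum_{1\leq i<j\leq n}f(x_{i}+x_{j})+\cdots+(-1)^{n-1}f\Bigl(\sum_{i=1}^{n}x_{i}\Bigr)\geq 0 \] for all $x_{1},\ldots,x_{n}\in\mathcal{C}$ and $n\geq1$ (the general term being $(-1)^{k-1}\sum_{1\le i_1<\cdots<i_k\le n} f(x_{i_1}+\cdots+x_{i_k})$). If moreover $f$ admits a continuous extension to $\overline{\mathcal{C}}$, then \[ f(0)\geq\sum_{i=1}^{n}f(x_{i})-\sum_{1\leq i<j\leq n}f(x_{i}+x_{j})+\cdots+(-1)^{n-1}f\Bigl(\sum_{i=1}^{n}x_{i}\Bigr)\geq 0 \] for all $x_{1},\ldots,x_{n}\in\overline{\mathcal{C}}$ and $n\geq1$.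
   Context: A function $f:\mathcal{C}\rightarrow\mathbb{R}_{+}$ on an open convex cone $\mathcal{C}$ is completely monotone if $f$ is $C^{\infty}$ on $\mathcal{C}$ and for all integers $k\geq1$ and all $v_{1},\ldots,v_{k}\in\mathcal{C}$, $(-1)^{k}D_{v_{1}}\cdots D_{v_{k}}f(x)\geq0$ for all $x\in\mathcal{C}$, where $D_{v}$ is the directional derivative along $v$. *)

From HB Require Import structures.
From mathcomp Require Import all_boot all_order all_algebra.
From mathcomp Require Import all_classical all_reals all_analysis.
Set Implicit Arguments. Unset Strict Implicit. Unset Printing Implicit Defensive.
Import Order.TTheory GRing.Theory Num.Theory.
Import numFieldNormedType.Exports.
Local Open Scope classical_set_scope.
Local Open Scope ring_scope.

Definition is_cone {R : realType} {d : nat} (C : set 'rV[R]_d) : Prop :=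
  forall x (t : R), C x -> 0 < t -> C (t *: x).

Definition is_convex {R : realType} {d : nat} (C : set 'rV[R]_d) : Prop :=
  forall x y (t : R), C x -> C y -> 0 <= t -> t <= 1 -> C (t *: x + (1 - t) *: y).

Definition open_convex_cone {R : realType} {d : nat} (C : set 'rV[R]_d) : Prop :=
  open C /\ is_convex C /\ is_cone C.

Fixpoint iter_dir_deriv {R : realType} {d : nat}
    (f : 'rV[R]_d -> R) (vs : seq 'rV[R]_d) : 'rV[R]_d -> R :=
  match vs with
  | [::] => f
  | v :: vs' => fun x => 'D_v (iter_dir_deriv f vs') x
  end.

(* f is C^infinity on the open set C: every iterated directional derivative
   is (Frechet) differentiable at every point of C. *)
Definition smooth_on {R : realType} {d : nat} (C : set 'rV[R]_d)
    (f : 'rV[R]_d -> R) : Prop :=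
  forall (vs : seq 'rV[R]_d) x, C x -> differentiable (iter_dir_deriv f vs) x.

Definition completely_monotone {R : realType} {d : nat} (C : set 'rV[R]_d)
    (f : 'rV[R]_d -> R) : Prop :=
  (forall x, C x -> 0 <= f x) /\
  smooth_on C f /\
  forall (vs : seq 'rV[R]_d), (1 <= size vs)%N ->
    (forall v, v \in vs -> C v) ->
    forall x, C x -> 0 <= (-1) ^+ size vs * iter_dir_deriv f vs x.

Definition incl_excl_sum {R : realType} {d n : nat}
    (f : 'rV[R]_d -> R) (x : 'I_n -> 'rV[R]_d) : R :=
  \sum_(S : {set 'I_n} | (0 < #|S|)%N)
     (-1) ^+ (#|S|.-1) * f (\sum_(i in S) x i).

From mathcomp Require Import all_boot all_order all_algebra.
From mathcomp Require Import all_classical all_reals all_analysis.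
From mathcomp Require Import ring lra.
Set Implicit Arguments.
Unset Strict Implicit.
Unset Printing Implicit Defensive.
Import Order.TTheory GRing.Theory Num.Theory.
Import numFieldNormedType.Exports.
Local Open Scope classical_set_scope.
Local Open Scope ring_scope.

(* Peeling off one point a at a time, the inclusion-exclusion sum over A is the sum over
   A \ {a} plus (-1)^(|A|-1) times the iterated forward difference of f along the x_i,
   i in A \ {a}, taken at x_a.  By the mean value theorem each forward difference along
   x_a becomes a directional derivative along x_a at a point of the cone, so the signs
   are those prescribed by complete monotonicity.  On the closure, g(0) minus the sum is
   (-1)^n times the n-fold difference of g at 0; both bounds follow by replacing x_i with
   x_i + t c and the base point 0 with t c, for some c in the cone, and letting t -> 0+. *)

Lemma finset_ind_setD1 (I : finType) (P : {set I} -> Prop) :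
  P finset.set0 -> (forall (A : {set I}) a, a \in A -> P (A :\ a) -> P A) ->
  forall A, P A.
Proof.
move=> P0 PD A; elim: {A}#|A| {-2}A (erefl #|A|) => [|k IH] A cA.
  by rewrite (_ : A = finset.set0) //; apply/eqP; rewrite -cards_eq0 cA.
have [a aA] : exists a, a \in A by apply/set0Pn; rewrite -card_gt0 cA.
by apply: (PD _ a aA); apply: IH; move: cA; rewrite (cardsD1 a) aA => -[].
Qed.

Lemma sum_subsets_setD1 (I : finType) (W : nmodType) (F : {set I} -> W)
    (A : {set I}) (a : I) : a \in A ->
  \sum_(T : {set I} | T \subset A) F T =
  \sum_(T : {set I} | T \subset A :\ a) (F T + F (a |: T)).
Proof.
move=> aA; rewrite big_split /= (bigID (fun T : {set I} => a \in T)) /= addrC.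
congr (_ + _); first by apply: eq_bigl => T; rewrite subsetD1.
rewrite (reindex_onto (fun T => a |: T) (fun T => T :\ a)); last first.
  by move=> T /andP[_ aT]; rewrite finset.setD1K.
apply: eq_bigl => T; rewrite setU11 andbT finset.subUset finset.sub1set aA /=.
rewrite subsetD1; case aT: (a \in T) => /=; last by rewrite setU1K ?aT ?eqxx ?andbT.
suff -> : ((a |: T) :\ a == T) = false by rewrite !andbF.
by apply/negbTE/eqP => E; move: aT; rewrite -E !inE eqxx.
Qed.

Lemma mulr_sign_subn (R : ringType) (t m : nat) : (t <= m)%N ->
  (-1) ^+ m * (-1) ^+ (m - t) = (-1) ^+ t :> R.
Proof.
move=> tm; rewrite -{1}(subnK tm) addnC exprD -mulrA -exprD addnn -mul2n.
by rewrite exprM sqrrN !expr1n mulr1.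
Qed.

Lemma sum_translate (R : ringType) (V : lmodType R) (I : finType) (x : I -> V)
    (T : {set I}) (t : R) (c : V) :
  \sum_(i in T) (x i + t *: c) = \sum_(i in T) x i + t *: (#|T|%:R *: c).
Proof. by rewrite big_split /= sumr_const scaler_nat scalerMnr. Qed.

Section FiniteDifferences.
Variables (R : comRingType) (V : zmodType) (I : finType) (x : I -> V).
Implicit Types (A T : {set I}) (G : V -> R).

(* The iterated forward difference Delta_(x a_1) ... Delta_(x a_k) G at z,
   for A = {a_1, ..., a_k}. *)
Definition fdiff A G z : R :=
  \sum_(T : {set I} | T \subset A) (-1) ^+ (#|A| - #|T|) * G (z + \sum_(i in T) x i).

Lemma fdiff_set0 G z : fdiff finset.set0 G z = G z.
Proof.
rewrite /fdiff (big_pred1 finset.set0); last by move=> T; rewrite /= finset.subset0.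
by rewrite cards0 subnn expr0 mul1r big_set0 addr0.
Qed.

Lemma fdiff_setD1 A a G z : a \in A ->
  fdiff A G z = fdiff (A :\ a) G (z + x a) - fdiff (A :\ a) G z.
Proof.
move=> aA; rewrite /fdiff (sum_subsets_setD1 _ aA) -sumrB; apply: eq_bigr => T TAa.
have /andP[TA aT] : (T \subset A) && (a \notin T) by rewrite -subsetD1.
have tm : (#|T| <= #|A :\ a|)%N by apply: subset_leq_card.
rewrite big_setU1 //= cardsU1 aT (cardsD1 a A) aA add1n subSS subSn //.
by rewrite exprS mulN1r mulNr addrA addrC.
Qed.

Lemma signed_fdiff_setT G z :
  (-1) ^+ #|I| * fdiff [set: I]%SET G z =
  \sum_(T : {set I}) (-1) ^+ #|T| * G (z + \sum_(i in T) x i).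
Proof.
rewrite /fdiff mulr_sumr cardsT.
rewrite (eq_bigl (fun T : {set I} => true)) => [|T]; last first.
  by rewrite finset.subsetT.
by apply: eq_bigr => T _; rewrite mulrA mulr_sign_subn // max_card.
Qed.

Definition incl_excl_on f A : R :=
  \sum_(T : {set I} | T \subset A)
    (if (0 < #|T|)%N then (-1) ^+ #|T|.-1 * f (\sum_(i in T) x i) else 0).

Lemma incl_excl_on_set0 f : incl_excl_on f finset.set0 = 0.
Proof.
rewrite /incl_excl_on (big_pred1 finset.set0) ?cards0 // => T.
by rewrite /= finset.subset0.
Qed.

Lemma incl_excl_on_setD1 f A a : a \in A ->
  incl_excl_on f A =
  incl_excl_on f (A :\ a) + (-1) ^+ #|A :\ a| * fdiff (A :\ a) f (x a).
Proof.
move=> aA; rewrite /incl_excl_on (sum_subsets_setD1 _ aA) big_split /=.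
congr (_ + _); rewrite /fdiff mulr_sumr; apply: eq_bigr => T TAa.
have /andP[TA aT] : (T \subset A) && (a \notin T) by rewrite -subsetD1.
have tm : (#|T| <= #|A :\ a|)%N by apply: subset_leq_card.
by rewrite cardsU1 aT add1n /= big_setU1 //= mulrA mulr_sign_subn.
Qed.

End FiniteDifferences.

Lemma incl_excl_sum_on (R : realType) (d n : nat) (f : 'rV[R]_d -> R)
    (x : 'I_n -> 'rV[R]_d) :
  incl_excl_sum f x = incl_excl_on x f [set: 'I_n]%SET.
Proof.
rewrite /incl_excl_sum /incl_excl_on -big_mkcondr /=.
by apply: eq_bigl => T; rewrite finset.subsetT.
Qed.

Lemma incl_excl_sum_signed (R : realType) (d n : nat) (g : 'rV[R]_d -> R)
    (x : 'I_n -> 'rV[R]_d) :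
  incl_excl_sum g x = g 0 - \sum_(T : {set 'I_n}) (-1) ^+ #|T| * g (\sum_(i in T) x i).
Proof.
rewrite (bigD1 finset.set0) //= cards0 expr0 mul1r big_set0 opprD addNKr.
rewrite /incl_excl_sum -sumrN; apply: eq_big => T; first by rewrite card_gt0.
by move=> T0; rewrite -[in RHS](prednK T0) exprS mulN1r mulNr opprK.
Qed.

Section NormedSpace.
Variables (R : realType) (V W : normedModType R).

Lemma is_derive_translate (F : V -> W) z c v df : is_derive (z + c) v F df ->
  is_derive z v (fun p => F (p + c)) df.
Proof.
have E : (fun h : R => h^-1 *: (((fun p => F (p + c)) \o shift z) (h *: v)
                                 - F (z + c))) =
         (fun h : R => h^-1 *: ((F \o shift (z + c)) (h *: v) - F (z + c))).
  by apply: funext => h /=; rewrite addrA.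
by move=> [dF <-]; apply: DeriveDef; [rewrite /derivable E | rewrite /derive E].
Qed.

Lemma is_derive_line (F : V -> W) z y (t : R) df : is_derive (z + t *: y) y F df ->
  is_derive t 1 (fun s : R => F (z + s *: y)) df.
Proof.
have E : (fun h : R => h^-1 *: (((fun s : R => F (z + s *: y)) \o shift t) (h *: 1)
                                 - F (z + t *: y))) =
         (fun h : R => h^-1 *: ((F \o shift (z + t *: y)) (h *: y) - F (z + t *: y))).
  by apply: funext => h /=; rewrite [h *: 1]mulr1 scalerDl addrCA.
by move=> [dF <-]; apply: DeriveDef; [rewrite /derivable E | rewrite /derive E].
Qed.

Lemma closure_inhabited (C : set V) a : closure C a -> exists c, C c.
Proof. by move=> /(_ setT filterT) [c [Cc _]]; exists c. Qed.

Lemma closure_ray (C : set V) p q :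
  (forall t : R, 0 < t -> C (p + t *: q)) -> closure C p.
Proof.
move=> Cpq B /nbhs_ballP [e e0 Be].
have q1 : 0 < 1 + `|q| by have := normr_ge0 q; lra.
pose t := e / (1 + `|q|).
have t0 : 0 < t by rewrite divr_gt0.
exists (p + t *: q); split; first exact: Cpq.
apply: Be; rewrite -ball_normE /= opprD addrA subrr add0r normrN normrZ gtr0_norm //.
by rewrite /t mulrAC ltr_pdivrMr // mulrDr mulr1 ltrDr.
Qed.

Lemma cvg_within_ray (T : topologicalType) (K : set V) (g : V -> T) p w :
  {within K, continuous g} -> K p -> (forall t : R, 0 < t -> K (p + t *: w)) ->
  g (p + t *: w) @[t --> 0^'+] --> g p.
Proof.
move=> /subspace_continuousP gc Kp Kpw; apply: (cvg_comp _ _ _ (gc p Kp)) => P /= gP.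
have ray_cvg : p + t *: w @[t --> (0 : R)^'+] --> p.
  apply: cvg_at_right_filter; rewrite -[X in _ --> X]addr0 -[X in _ + X](scale0r w).
  by apply: cvgD; [exact: cvg_cst | apply: cvgZl; exact: cvg_id].
have near_ray : \forall t \near (0 : R)^'+, K (p + t *: w) -> P (p + t *: w).
  exact: ray_cvg gP.
near=> t.
have : K (p + t *: w) -> P (p + t *: w) by near: t.
by apply; apply: Kpw; near: t; exact: nbhs_right_gt.
Unshelve. all: by end_near. Qed.

Lemma ge0_limit_sum (J : finType) (P : pred J) (a : J -> R) (p w : J -> V)
    (K : set V) (g : V -> R) :
  {within K, continuous g} -> (forall j, P j -> K (p j)) ->
  (forall j (t : R), P j -> 0 < t -> K (p j + t *: w j)) ->
  (forall t : R, 0 < t -> 0 <= \sum_(j | P j) a j * g (p j + t *: w j)) ->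
  0 <= \sum_(j | P j) a j * g (p j).
Proof.
move=> gc Kp Kpw ge0.
have sum_cvg : \sum_(j | P j) a j * g (p j + t *: w j) @[t --> (0 : R)^'+] -->
               \sum_(j | P j) a j * g (p j).
  apply: cvg_big => [|j Pj]; first exact: add_continuous.
  apply: cvgMl_tmp; apply: (cvg_within_ray gc (Kp j Pj)) => t.
  exact: Kpw.
apply: (closed_cvg _ (@closed_ge R 0) _ _ sum_cvg).
near=> t; apply: ge0; near: t; exact: nbhs_right_gt.
Unshelve. all: by end_near. Qed.

End NormedSpace.

Section ConvexCone.
Variables (R : realType) (d : nat) (C : set 'rV[R]_d).
Local Notation V := 'rV[R]_d.
Hypotheses (Cconvex : is_convex C) (Ccone : is_cone C).

Lemma cone_add a b : C a -> C b -> C (a + b).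
Proof.
have half1 : 2 * (1 / 2) = 1 :> R by field.
have half2 : 2 * (1 - 1 / 2) = 1 :> R by field.
move=> Ca Cb; have := Ccone (Cconvex (t := 1 / 2) Ca Cb _ _) (ltr0n R 2).
rewrite scalerDr !scalerA half1 half2 !scale1r; apply; first by rewrite divr_ge0.
by rewrite ler_pdivrMr // mul1r ler1n.
Qed.

Lemma cone_add_scale z y (t : R) : C z -> C y -> 0 <= t -> C (z + t *: y).
Proof.
move=> Cz Cy; rewrite le_eqVlt => /orP[/eqP <-|t0]; first by rewrite scale0r addr0.
by apply: cone_add => //; apply: Ccone.
Qed.

Hypothesis Copen : open C.

Lemma closure_add_interior a b : closure C a -> C b -> C (a + b).
Proof.
move=> Ca Cb; have /nbhs_ballP [r r0 Br] : nbhs b C by apply: open_nbhs_nbhs.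
have [y [Cy ay]] := Ca _ (nbhsx_ballx a r r0).
have -> : a + b = y + (b + (a - y)) by rewrite addrCA [y + _]addrC subrK addrC.
apply: cone_add Cy (Br _ _); move: ay; rewrite -!ball_normE /=.
by rewrite opprD addrA subrr add0r normrN.
Qed.

Lemma closure_add a b : closure C a -> closure C b -> closure C (a + b).
Proof.
move=> Ca Cb; have [c Cc] := closure_inhabited Ca.
apply: (closure_ray (q := c)) => t t0; rewrite -addrA.
by apply: closure_add_interior => //; apply: closure_add_interior => //; apply: Ccone.
Qed.

Lemma closure_sum (I : finType) (y : I -> V) (T : {set I}) c :
  C c -> (forall i, closure C (y i)) -> closure C (\sum_(i in T) y i).
Proof.
move=> Cc Cy; apply: (big_ind (closure C)) => //; last by move=> *; apply: closure_add.
by apply: (closure_ray (q := c)) => t t0; rewrite add0r; apply: Ccone.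
Qed.

End ConvexCone.

Section CompletelyMonotone.
Variables (R : realType) (d : nat) (C : set 'rV[R]_d).
Local Notation V := 'rV[R]_d.
Hypotheses (Cconvex : is_convex C) (Ccone : is_cone C).
Variables (I : finType) (x : I -> V).
Hypothesis Cx : forall i, C (x i).

Lemma is_derive_fdiff (G : V -> R) v (A : {set I}) p :
  (forall q, C q -> derivable G q v) -> C p ->
  is_derive p v (fdiff x A G) (fdiff x A ('D_v G) p).
Proof.
move=> dG; elim/finset_ind_setD1: A p => [|A a aA IH] p Cp.
  have -> : fdiff x finset.set0 G = G by apply: funext => q; rewrite fdiff_set0.
  by rewrite fdiff_set0; apply: derivableP; apply: dG.
have -> : fdiff x A G = (fun q => fdiff x (A :\ a) G (q + x a)) - fdiff x (A :\ a) G.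
  by apply: funext => q; rewrite (fdiff_setD1 _ _ _ aA).
rewrite (fdiff_setD1 _ _ _ aA); apply: is_deriveB; last exact: IH.
by apply: is_derive_translate; apply: IH; apply: cone_add.
Qed.

Lemma fdiff_mvt (G : V -> R) (A : {set I}) a z : a \in A ->
  (forall q, C q -> derivable G q (x a)) -> C z ->
  exists2 c : R, 0 <= c &
    fdiff x A G z = fdiff x (A :\ a) ('D_(x a) G) (z + c *: x a).
Proof.
move=> aA dG Cz; pose h t := fdiff x (A :\ a) G (z + t *: x a).
have h' (t : R) : 0 <= t ->
    is_derive t 1 h (fdiff x (A :\ a) ('D_(x a) G) (z + t *: x a)).
  move=> t0; apply: is_derive_line; apply: is_derive_fdiff => //.
  exact: cone_add_scale.
have hcont : {within `[0, 1], continuous h}.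
  apply: derivable_within_continuous => t; rewrite in_itv /= => /andP[t0 _].
  by have [] := h' t t0.
have [c c01 hc] : exists2 c, c \in `[0, 1] &
    h 1 - h 0 = fdiff x (A :\ a) ('D_(x a) G) (z + c *: x a) * (1 - 0).
  apply: MVT_segment ler01 _ hcont => t; rewrite in_itv /= => /andP[t0 _].
  exact/h'/ltW.
exists c; first by rewrite (itvP c01).
rewrite subr0 mulr1 /h scale1r scale0r addr0 in hc.
by rewrite -hc (fdiff_setD1 _ _ _ aA).
Qed.

Variable f : V -> R.
Hypothesis hf : completely_monotone C f.

Lemma fdiff_iter_dir_deriv_sign (A : {set I}) ws z :
  (forall v, v \in ws -> C v) -> C z ->
  0 <= (-1) ^+ (size ws + #|A|) * fdiff x A (iter_dir_deriv f ws) z.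
Proof.
have [f_ge0 [f_smooth f_cm]] := hf.
elim/finset_ind_setD1: A ws z => [|A a aA IH] ws z Cws Cz.
  rewrite fdiff_set0 cards0 addn0; case: ws Cws => [_|w ws Cws]; last exact: f_cm.
  by rewrite mul1r; apply: f_ge0.
have dG q : C q -> derivable (iter_dir_deriv f ws) q (x a).
  by move=> Cq; apply: diff_derivable; apply: f_smooth.
have [c c0 ->] := fdiff_mvt aA dG Cz.
rewrite (cardsD1 a A) aA add1n -addSnnS; apply: (IH (x a :: ws)).
  by move=> v; rewrite inE => /orP[/eqP ->|]; [apply: Cx | apply: Cws].
exact: cone_add_scale.
Qed.

Lemma incl_excl_on_ge0 (A : {set I}) : 0 <= incl_excl_on x f A.
Proof.
elim/finset_ind_setD1: A => [|A a aA IH]; first by rewrite incl_excl_on_set0.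
rewrite (incl_excl_on_setD1 _ _ aA) addr_ge0 //.
by apply: (@fdiff_iter_dir_deriv_sign _ [::]).
Qed.

End CompletelyMonotone.

Lemma incl_excl_sum_ge0 (R : realType) (d : nat) (C : set 'rV[R]_d)
    (f : 'rV[R]_d -> R) n (x : 'I_n -> 'rV[R]_d) :
  is_convex C -> is_cone C -> completely_monotone C f -> (forall i, C (x i)) ->
  0 <= incl_excl_sum f x.
Proof.
move=> Cconvex Ccone hf Cx; rewrite incl_excl_sum_on.
exact: (incl_excl_on_ge0 Cconvex Ccone Cx hf).
Qed.

Section Boundary.
Variables (R : realType) (d : nat) (C : set 'rV[R]_d) (f g : 'rV[R]_d -> R).
Local Notation V := 'rV[R]_d.
Hypotheses (Copen : open C) (Cconvex : is_convex C) (Ccone : is_cone C).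
Hypothesis hf : completely_monotone C f.
Hypotheses (gc : {within closure C, continuous g}) (gf : forall y, C y -> g y = f y).
Variables (n : nat) (x : 'I_n -> V) (c : V).
Hypotheses (Cx : forall i, closure C (x i)) (Cc : C c).

Let C_shift (t : R) : 0 < t -> forall i, C (x i + t *: c).
Proof. by move=> t0 i; apply: closure_add_interior => //; apply: Ccone. Qed.

Let C_ray (T : {set 'I_n}) k (t : R) : (0 < k)%N -> 0 < t ->
  C (\sum_(i in T) x i + t *: (k%:R *: c)).
Proof.
move=> k0 t0; apply: closure_add_interior => //; first exact: closure_sum Cc Cx.
by apply: Ccone => //; apply: Ccone => //; rewrite ltr0n.
Qed.

Lemma incl_excl_sum_closure_ge0 : 0 <= incl_excl_sum g x.
Proof.
rewrite /incl_excl_sum.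
apply: (ge0_limit_sum (p := fun T : {set 'I_n} => \sum_(i in T) x i)
                      (w := fun T : {set 'I_n} => #|T|%:R *: c) gc)
  => [T _|T t T0 t0|t t0].
- exact: closure_sum Cc Cx.
- exact/subset_closure/C_ray.
rewrite [X in _ <= X](_ : _ = incl_excl_sum f (fun i => x i + t *: c)).
  exact: incl_excl_sum_ge0 Cconvex Ccone hf (C_shift t0).
by apply: eq_bigr => T T0; rewrite sum_translate gf //; apply: C_ray.
Qed.

Lemma incl_excl_sum_closure_le : incl_excl_sum g x <= g 0.
Proof.
rewrite -subr_ge0 incl_excl_sum_signed opprB addrC subrK.
apply: (ge0_limit_sum (p := fun T : {set 'I_n} => \sum_(i in T) x i)
                      (w := fun T : {set 'I_n} => #|T|.+1%:R *: c) gc)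
  => [T _|T t _ t0|t t0].
- exact: closure_sum Cc Cx.
- exact/subset_closure/C_ray.
have -> : \sum_(T : {set 'I_n})
             (-1) ^+ #|T| * g (\sum_(i in T) x i + t *: (#|T|.+1%:R *: c)) =
          \sum_(T : {set 'I_n})
             (-1) ^+ #|T| * f (t *: c + \sum_(i in T) (x i + t *: c)).
  apply: eq_bigr => T _; rewrite sum_translate addrCA -scalerDr.
  by rewrite -{2}[c]scale1r -scalerDl nat1r gf //; apply: C_ray.
rewrite -signed_fdiff_setT -cardsT.
apply: (fdiff_iter_dir_deriv_sign Cconvex Ccone (C_shift t0) hf _ (ws := [::])) => //.
exact: Ccone.
Qed.

End Boundary.

Theorem theorem4p4 (R : realType) (d : nat) (C : set 'rV[R]_d)
    (f : 'rV[R]_d -> R) :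
  open_convex_cone C -> completely_monotone C f ->
  (forall (n : nat) (x : 'I_n -> 'rV[R]_d), (1 <= n)%N ->
     (forall i, C (x i)) -> 0 <= incl_excl_sum f x) /\
  (forall g : 'rV[R]_d -> R,
     {within closure C, continuous g} -> (forall y, C y -> g y = f y) ->
     forall (n : nat) (x : 'I_n -> 'rV[R]_d), (1 <= n)%N ->
       (forall i, closure C (x i)) ->
       0 <= incl_excl_sum g x /\ incl_excl_sum g x <= g 0).
Proof.
move=> [Copen [Cconvex Ccone]] hf; split=> [n x _ Cx | g gc gf n x n1 Cx].
  exact: incl_excl_sum_ge0 Cconvex Ccone hf Cx.
have [c Cc] := closure_inhabited (Cx (Ordinal n1)).
split; first exact: (incl_excl_sum_closure_ge0 Copen Cconvex Ccone hf gc gf Cx Cc).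
exact: (incl_excl_sum_closure_le Copen Cconvex Ccone hf gc gf Cx Cc).
Qed.
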